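(* Let $(\mathcal S,\mathcal A,P,r)$ be a finite MDP such that $\mathcal P^\pi g^\star=g^\star$ for every policy $\pi$, and let $(g^\star,h^\star)$ be a solution of the modified Bellman equations. Let $V^0\in\mathbb R^n$, $V^k=\tfrac12V^{k-1}+\tfrac12TV^{k-1}$ for $k\ge1$, and let $\pi_k$ be greedy policies, $T^{\pi_k}V^k=TV^k$. Then for every $k\ge1$, \[\|g^\star-g^{\pi_k}\|_\infty\le\|TV^k-V^k-g^\star\|_\infty\le\frac{4\|V^0-h^\star\|_\infty}{\sqrt{\varpi k}},\] where $\varpi=3.141592\ldots$ is the circle constant.
   Context: An MDP $(\mathcal S,\mathcal A,P,r)$ has finite state space $\mathcal S$ ($|\mathcal S|=n$, functions identified with $\mathbb R^n$), finite action space, transition probabilities $P(s'\mid s,a)$ and bounded reward $r$. For a policy $\pi$: $r^\pi(s)=\sum_a\pi(a\mid s)r(s,a)$, $\mathcal P^\pi(s,s')=\sum_a\pi(a\mid s)P(s'\mid s,a)$, $g^\pi(s)=\liminf_{T\to\infty}\frac1T\mathbb E_\pi[\sum_{t=0}^{T-1}r(s_t,a_t)\mid s_0=s]$, $g^\star=\max_\pi g^\pi$. $T^\pi V=r^\pi+\mathcal P^\pi V$, $(TV)(s)=\max_a\{r(s,a)+\sum_{s'}P(s'\mid s,a)V(s')\}$. A pair $(g,h)$ solves the modified Bellman equations if $\max_a\sum_{s'}P(s'\mid s,a)g(s')=g(s)$ and $\max_a\{r(s,a)+\sum_{s'}P(s'\mid s,a)h(s')\}=h(s)+g(s)$ for all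 $s$, with some policy attaining both maxima simultaneously; the first component of any solution equals $g^\star$. *)

From HB Require Import structures.
From mathcomp Require Import all_boot all_order all_algebra.
From mathcomp Require Import all_classical all_reals all_analysis.
Set Implicit Arguments. Unset Strict Implicit. Unset Printing Implicit Defensive.
Import Order.TTheory GRing.Theory Num.Theory.
Local Open Scope classical_set_scope.
Local Open Scope ring_scope.

Section MDP.
Variables (R : realType) (S A : finType).
Variables (P : S -> A -> S -> R) (r : S -> A -> R).

Definition is_kernel : Prop :=
  (forall s a s', 0 <= P s a s') /\ (forall s a, \sum_(s' : S) P s a s' = 1).

Definition is_policy (pi : S -> A -> R) : Prop :=
  (forall s a, 0 <= pi s a) /\ (forall s, \sum_(a : A) pi s a = 1).

Definition rpi (pi : S -> A -> R) (s : S) : R := \sum_(a : A) pi s a * r s a.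

Definition Ppi (pi : S -> A -> R) (V : S -> R) (s : S) : R :=
  \sum_(a : A) pi s a * \sum_(s' : S) P s a s' * V s'.

Definition Tpi (pi : S -> A -> R) (V : S -> R) (s : S) : R :=
  rpi pi s + Ppi pi V s.

(* maximum over the (finite, nonempty) action set *)
Definition maxA (F : A -> R) : R := sup (range F).

Definition Tbell (V : S -> R) (s : S) : R :=
  maxA (fun a => r s a + \sum_(s' : S) P s a s' * V s').

(* average gain: g^pi(s) = liminf_T (1/T) E_pi[sum_{t<T} r(s_t,a_t) | s_0 = s]
   = liminf_T (1/T) sum_{t<T} ((P^pi)^t r^pi)(s); indexed by T = n+1 *)
Definition gain (pi : S -> A -> R) (s : S) : R :=
  limn_inf (fun n : nat =>
    (n.+1%:R)^-1 * \sum_(t < n.+1) iter t (Ppi pi) (rpi pi) s).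

Definition gstar (s : S) : R := sup [set gain pi s | pi in is_policy].

Definition modified_bellman (g h : S -> R) : Prop :=
  (forall s, maxA (fun a => \sum_(s' : S) P s a s' * g s') = g s) /\
  (forall s, Tbell h s = h s + g s) /\
  (exists pi, is_policy pi /\ (forall s, Ppi pi g s = g s) /\
                              (forall s, Tpi pi h s = h s + g s)).

Fixpoint Viter (V0 : S -> R) (k : nat) : S -> R :=
  match k with
  | O => V0
  | k'.+1 => fun s => 2^-1 * Viter V0 k' s + 2^-1 * Tbell (Viter V0 k') s
  end.

End MDP.

Definition supnorm (R : realType) (S : finType) (v : S -> R) : R :=
  \big[Num.max/0]_(s : S) `|v s|.

From Pilot Require Import Defs.
From HB Require Import structures.
From mathcomp Require Import all_boot all_order all_algebra.
From mathcomp Require Import all_classical all_reals all_analysis.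
From mathcomp Require Import ring lra zify.
Set Implicit Arguments. Unset Strict Implicit.
Import Order.TTheory GRing.Theory Num.Theory.
Import numFieldNormedType.Exports.
Local Open Scope ring_scope.

(* Since P(.|s,a) g* = g*(s) for every action a, the Bellman operator commutes with
   adding multiples of g*: T (V + t g* ) = T V + t g*.  Hence x_k := V^k - (k/2) g*
   is the Krasnosel'skii-Mann iteration x_{k+1} = (x_k + T' x_k) / 2 of the
   sup-norm nonexpansive map T' V := T V - g*, which fixes h*.  With R := |V^0 - h*|
   and B_N a Binomial(N, 1/2) variable, a joint induction on the grid (m, n) gives
     |x_m - x_n| <= 2R P(m <= B_{m+n} < n),   |x_m - T' x_j| <= 2R P(m <= B_{m+j} < j+2),
   so the residual |T' x_k - x_k| = 2 |x_k - x_{k+1}| is at most 4R C(2k+1, k) / 2^(2k+1).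
   The Wallis integrals W_n = int_0^pi sin^n bound this central binomial probability by
   1 / sqrt(pi k).  Finally, if T^pi V = V + g* + d with P^pi g* = g* and |d| <= eps,
   the Cesaro averages of (P^pi)^t r^pi telescope to g* + O(1/n) + (average of
   (P^pi)^t d), so |g* - g^pi| <= eps. *)

Section Wallis.
Context {R : realType}.
Notation mu := (@lebesgue_measure R).

Definition wallis (k : nat) : R := \int[mu]_(x in `[0, pi]) (sin x ^+ k).

Lemma continuous_sinX k : continuous (fun x : R => sin x ^+ k).
Proof.
elim: k => [|k IH] x; first exact: cst_continuous.
have -> : (fun x : R => sin x ^+ k.+1) = sin \* (fun x => sin x ^+ k).
  by apply/funext => y; rewrite exprS.
exact: continuousM (@continuous_sin R x) (IH x).
Qed.

Lemma integrable_0pi (f : R -> R) :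
  continuous f -> mu.-integrable `[0, pi] (EFin \o f).
Proof.
move=> cf; apply: continuous_compact_integrable; first exact: segment_compact.
exact/continuous_subspaceT.
Qed.

(* Integration by parts with [u = sin^(k+1)], [v' = sin], and [cos^2 = 1 - sin^2]. *)
Lemma wallisSS k : wallis k.+2 = k.+1%:R * (wallis k - wallis k.+2).
Proof.
have d_sinX (x : R) : is_derive x 1 (fun x => sin x ^+ k.+1) (k.+1%:R * sin x ^+ k * cos x).
  by have := is_deriveX k.+1 (is_derive_sin x); rewrite exprfctE mulrC.
rewrite {1}/wallis.
have -> : \int[mu]_(x in `[0, pi]) (sin x ^+ k.+2) =
          \int[mu]_(x in `[0, pi]) (sin x ^+ k.+1 * sin x).
  by apply: eq_Rintegral => x _; rewrite exprSr.
rewrite (@Rintegration_by_parts R (fun x => sin x ^+ k.+1) (fun x => - cos x)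
   (fun x => k.+1%:R * sin x ^+ k * cos x) sin 0 pi); last first.
- by move=> x _; rewrite derive1E deriveN// derive_val opprK.
- split.
  + by move=> x _; apply: derivableN.
  + by apply: cvgN; apply: cvg_at_right_filter; exact: continuous_cos.
  + by apply: cvgN; apply: cvg_at_left_filter; exact: continuous_cos.
- exact/continuous_subspaceT/continuous_sin.
- by move=> x _; rewrite derive1E (@derive_val _ _ _ _ _ _ _ (d_sinX x)).
- split.
  + by move=> x _; exact: (@ex_derive _ _ _ _ _ _ _ (d_sinX x)).
  + by apply: cvg_at_right_filter; exact: continuous_sinX.
  + by apply: cvg_at_left_filter; exact: continuous_sinX.
- apply/continuous_subspaceT => x; apply: cvgM; last exact: continuous_cos.
  by apply: cvgM; [exact: cvg_cst|exact: continuous_sinX].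
- exact: pi_gt0.
rewrite sin0 sinpi !expr0n /= !mul0r subrr sub0r.
have -> : \int[mu]_(x in `[0, pi]) (k.+1%:R * sin x ^+ k * cos x * - cos x) =
          \int[mu]_(x in `[0, pi]) ((-1) * (k.+1%:R * (sin x ^+ k - sin x ^+ k.+2))).
  apply: eq_Rintegral => x _; rewrite -addn2 exprD.
  by rewrite sin2cos2; ring.
have cont_diff : continuous (fun x : R => sin x ^+ k - sin x ^+ k.+2).
  by move=> x; apply: cvgB; exact: continuous_sinX.
have cont_scaled : continuous (fun x : R => k.+1%:R * (sin x ^+ k - sin x ^+ k.+2)).
  by move=> x; apply: cvgM; [exact: cvg_cst | exact: cont_diff].
rewrite !RintegralZl ?RintegralB ?mulN1r ?opprK //.
all: by [exact: measurable_itv | apply: integrable_0pi => //; exact: continuous_sinX].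
Qed.

Lemma wallis_rec k : k.+2%:R * wallis k.+2 = k.+1%:R * wallis k.
Proof.
have := wallisSS k; rewrite -[k.+2]addn1 natrD => e.
by rewrite mulrDl mul1r {2}e; ring.
Qed.

Lemma wallis0 : wallis 0 = pi.
Proof.
rewrite /wallis (eq_Rintegral _ (g := fun => 1)) //.
by rewrite Rintegral_cst//= lebesgue_measure_itv/= lte_fin pi_gt0/= subr0 mul1r.
Qed.

Lemma wallis1 : wallis 1 = 2.
Proof.
have -> : wallis 1 = \int[mu]_(x in `[0, pi]) sin x.
  by apply: eq_Rintegral => x _; rewrite expr1.
rewrite /Rintegral (@continuous_FTC2 _ _ (- cos)) ?pi_gt0//.
- change (- cos pi - - cos 0 = 2 :> R).
  by rewrite cospi cos0 opprK; lra.
- exact/continuous_subspaceT/continuous_sin.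
- split.
  + by move=> x _; exact/derivableN/derivable_cos.
  + by apply: cvgN; apply: cvg_at_right_filter; exact: continuous_cos.
  + by apply: cvgN; apply: cvg_at_left_filter; exact: continuous_cos.
- by move=> x _; rewrite derive1E deriveN// derive_val opprK.
Qed.

Lemma wallis_ge0 k : 0 <= wallis k.
Proof.
apply: Rintegral_ge0 => x /= /[!in_itv] /= /andP[x0 xpi].
by rewrite exprn_ge0// sin_ge0_pi// x0 xpi.
Qed.

Lemma wallisS_le k : wallis k.+1 <= wallis k.
Proof.
apply: le_Rintegral => //; try exact/integrable_0pi/continuous_sinX.
move=> x /= /[!in_itv] /= /andP[x0 xpi].
have s0 : 0 <= sin x by rewrite sin_ge0_pi// x0 xpi.
by rewrite exprS -[leRHS]mul1r ler_wpM2r// ?exprn_ge0// sin_le1.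
Qed.

Lemma wallis_prod k : k.+1%:R * wallis k.+1 * wallis k = 2 * pi.
Proof.
elim: k => [|k IH]; first by rewrite wallis0 wallis1 mul1r.
by rewrite wallis_rec -IH; ring.
Qed.

End Wallis.

Section CentralBinomial.
Context {R : realType}.

Definition binom_mid (n : nat) : R := 'C(n + n.+1, n)%:R / 2 ^+ (n + n.+1).

Lemma binom_mid_ge0 n : 0 <= binom_mid n.
Proof. by rewrite divr_ge0 // exprn_ge0. Qed.

Lemma bin_midS n :
  ('C(n.+1 + n.+2, n.+1) * n.+2 = 2 * n.*2.+3 * 'C(n + n.+1, n))%N.
Proof.
have -> : (n.+1 + n.+2 = n.*2.+3)%N by rewrite -addnn; lia.
have -> : (n + n.+1 = n.*2.+1)%N by rewrite -addnn; lia.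
have sym k : 'C(k.*2.+1, k.+1) = 'C(k.*2.+1, k).
  by rewrite -bin_sub -addnn; [congr 'C(_, _) |]; lia.
have symS : 'C(n.*2.+3, n.+2) = 'C(n.*2.+3, n.+1) by have := sym n.+1; rewrite doubleS.
have pascal : 'C(n.*2.+2, n.+1) = 2 * 'C(n.*2.+1, n) by rewrite binS sym; lia.
have := mul_bin_diag n.*2.+3 n.+1; rewrite /= pascal symS => diag.
by rewrite mulnC -diag mulnA (mulnC n.*2.+3).
Qed.

Lemma binom_mid_rec n : binom_mid n.+1 * (n.*2.+4)%:R = binom_mid n * (n.*2.+3)%:R.
Proof.
have eN : (n.+1 + n.+2 = (n + n.+1) + 2)%N by lia.
have e4 : (n.*2.+4 = 2 * n.+2)%N by rewrite -addnn; lia.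
have := congr1 (GRing.natmul (1 : R)) (bin_midS n).
rewrite /binom_mid eN e4 exprD !natrM.
set C1 := 'C(_ + 2, _)%:R; set C0 := 'C(_, n)%:R; set N := (2 : R) ^+ (n + n.+1).
have N0 : N != 0 by rewrite expf_neq0.
move=> hb; have -> : C1 / (N * 2 ^+ 2) * (2%:R * n.+2%:R) = C1 * n.+2%:R / (N * 2).
  by field.
by rewrite hb; field.
Qed.

Lemma wallis_even n : wallis n.*2.+2 = pi * binom_mid n :> R.
Proof.
elim: n => [|n IH].
  apply: (@mulfI _ 2); first by rewrite pnatr_eq0.
  by rewrite (wallis_rec 0) wallis0 /binom_mid /= addn1 bin0; field.
apply: (@mulfI _ (n.*2.+4)%:R); first by rewrite pnatr_eq0.
rewrite doubleS (wallis_rec n.*2.+2) IH.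
by rewrite mulrCA [RHS]mulrCA [_ * binom_mid _]mulrC [_ * binom_mid n.+1]mulrC binom_mid_rec.
Qed.

(* Wallis: [W_(2n+2)^2 <= W_(2n+2) W_(2n+1) = pi / (n+1)]. *)
Lemma binom_mid_sqr_le n : binom_mid n ^+ 2 * (pi * n.+1%:R) <= 1 :> R.
Proof.
have pi0 : (0 : R) < pi := pi_gt0 _.
have prod := @wallis_prod R n.*2.+1.
have le := @wallisS_le R n.*2.+1.
have ge0 := @wallis_ge0 R n.*2.+2.
rewrite wallis_even in prod le ge0.
have e2 : (n.*2.+2)%:R = 2 * n.+1%:R :> R by rewrite -natrM; congr _%:R; lia.
rewrite e2 in prod.
have H : n.+1%:R * (pi * binom_mid n * wallis n.*2.+1) = pi.
  by apply: (@mulfI _ 2) => //; rewrite -prod; ring.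
rewrite -(@ler_pM2l _ pi) // mulr1 -[leRHS]H.
have -> : pi * (binom_mid n ^+ 2 * (pi * n.+1%:R)) =
          n.+1%:R * ((pi * binom_mid n) * (pi * binom_mid n)) by ring.
by rewrite ler_wpM2l // ler_wpM2l.
Qed.

Lemma binom_mid_le_inv_sqrt k :
  (1 <= k)%N -> binom_mid k <= (Num.sqrt (pi * k%:R))^-1 :> R.
Proof.
move=> k1; have pi0 : (0 : R) < pi := pi_gt0 _.
have pk : (0 : R) < pi * k%:R by rewrite mulr_gt0 // ltr0n.
have sqr_le : binom_mid k ^+ 2 * (pi * k%:R) <= 1 :> R.
  apply: le_trans (binom_mid_sqr_le k).
  by rewrite ler_wpM2l ?exprn_ge0 ?binom_mid_ge0 // ler_wpM2l ?(ltW pi0) // ler_nat.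
rewrite -(@ler_pM2r _ (Num.sqrt (pi * k%:R))) ?sqrtr_gt0 // mulVf ?gt_eqF ?sqrtr_gt0 //.
rewrite -(ger0_norm (binom_mid_ge0 k)) -sqrtr_sqr -sqrtrM ?sqr_ge0 //.
by rewrite -[leRHS]sqrtr1 ler_sqrt.
Qed.

End CentralBinomial.

Section BinomialProbability.
Context {R : realType}.

Definition binom_psum (N b : nat) : R := \sum_(k < b) 'C(N, k)%:R.

(* The probability that a Binomial(N, 1/2) variable lies in [a, b). *)
Definition binom_prob (N a b : nat) : R := (binom_psum N b - binom_psum N a) / 2 ^+ N.

Lemma binom_psum0 N : binom_psum N 0 = 0.
Proof. exact: big_ord0. Qed.

Lemma binom_psumS N b : binom_psum N b.+1 = binom_psum N b + 'C(N, b)%:R.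
Proof. by rewrite /binom_psum big_ord_recr. Qed.

Lemma binom_psum_pascal N b :
  binom_psum N.+1 b.+1 = binom_psum N b.+1 + binom_psum N b.
Proof.
elim: b => [|b IH]; first by rewrite !binom_psumS !binom_psum0 !bin0 !add0r addr0.
by rewrite binom_psumS IH !binom_psumS binS natrD; ring.
Qed.

Lemma binom_psum_all N : binom_psum N N.+1 = 2 ^+ N.
Proof.
elim: N => [|N IH]; first by rewrite binom_psumS binom_psum0 bin0 add0r.
by rewrite binom_psum_pascal binom_psumS IH bin_small // addr0 exprS; ring.
Qed.

Lemma binom_psum_full N b : (N < b)%N -> binom_psum N b = 2 ^+ N.
Proof.
move=> Nb; rewrite -(subnKC Nb); elim: (b - N.+1)%N => [|i IH].
  by rewrite addn0 binom_psum_all.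
by rewrite addnS binom_psumS IH bin_small ?addr0 //; lia.
Qed.

Lemma binom_probxx N a : binom_prob N a a = 0.
Proof. by rewrite /binom_prob subrr mul0r. Qed.

Lemma binom_prob0 N b : (N < b)%N -> binom_prob N 0 b = 1.
Proof.
move=> Nb; rewrite /binom_prob binom_psum_full // binom_psum0 subr0.
by rewrite mulfV // expf_neq0.
Qed.

Lemma binom_prob_mid n : binom_prob (n + n.+1) n n.+1 = binom_mid n :> R.
Proof. by rewrite /binom_prob binom_psumS addrC addKr. Qed.

(* Pascal's rule, plus the symmetry ['C(m + n, i) = 'C(m + n, m + n - i)]. *)
Lemma binom_prob_stepr m n : (m <= n)%N ->
  binom_prob (m + n.+1) m n.+1 =
  2^-1 * binom_prob (m + n) m n + 2^-1 * binom_prob (m + n) m n.+2.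
Proof.
move=> mn; rewrite addnS /binom_prob exprS.
suff -> : binom_psum (m + n).+1 n.+1 - binom_psum (m + n).+1 m =
          (binom_psum (m + n) n - binom_psum (m + n) m) +
          (binom_psum (m + n) n.+2 - binom_psum (m + n) m).
  have p0 : (2 : R) ^+ (m + n) != 0 by rewrite expf_neq0.
  by field.
case: m mn => [|a] mn.
  rewrite !add0n !binom_psum0 binom_psum_pascal [binom_psum _ n.+2]binom_psumS.
  by rewrite bin_small // addr0; ring.
have : 'C(a.+1 + n, n.+1) = 'C(a.+1 + n, a) by rewrite -bin_sub; [congr 'C(_, _) |]; lia.
move: (a.+1 + n)%N => N sym.
rewrite !binom_psum_pascal [binom_psum _ n.+2]binom_psumS [binom_psum _ n.+1]binom_psumS.
by rewrite [binom_psum _ a.+1]binom_psumS sym; ring.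
Qed.

Lemma binom_prob_stepl m j : (m < j)%N ->
  binom_prob (m.+1 + j) m.+1 j.+2 =
  2^-1 * binom_prob (m + j) m j.+2 + 2^-1 * binom_prob (m + j) m j.
Proof.
move=> mj; rewrite /binom_prob exprS.
suff -> : binom_psum (m + j).+1 j.+2 - binom_psum (m + j).+1 m.+1 =
          (binom_psum (m + j) j.+2 - binom_psum (m + j) m) +
          (binom_psum (m + j) j - binom_psum (m + j) m).
  have p0 : (2 : R) ^+ (m + j) != 0 by rewrite expf_neq0.
  by field.
rewrite !binom_psum_pascal [binom_psum _ j.+1]binom_psumS [binom_psum _ m.+1]binom_psumS.
have -> : 'C(m + j, j) = 'C(m + j, m) by rewrite -bin_sub; [congr 'C(_, _) |]; lia.
ring.
Qed.

End BinomialProbability.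

Section KrasnoselskiiMann.
Context {R : realType} {S : Type}.

Definition dist_le (u v : S -> R) (c : R) := forall s, `|u s - v s| <= c.

Lemma dist_le_sym u v c : dist_le u v c -> dist_le v u c.
Proof. by move=> uv s; rewrite distrC. Qed.

Lemma dist_le_avg u v w c c' : dist_le u w c -> dist_le v w c' ->
  dist_le (fun s => 2^-1 * u s + 2^-1 * v s) w (2^-1 * c + 2^-1 * c').
Proof.
move=> uw vw s.
have -> : 2^-1 * u s + 2^-1 * v s - w s = 2^-1 * (u s - w s) + 2^-1 * (v s - w s).
  by field.
apply: le_trans (ler_normD _ _) _; rewrite !normrM gtr0_norm ?invr_gt0 ?ltr0n //.
by apply: lerD; apply: ler_wpM2l; rewrite ?invr_ge0 ?ler0n.
Qed.

Lemma half_add (a : R) : 2^-1 * a + 2^-1 * a = a.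
Proof. by field. Qed.

Variable T : (S -> R) -> S -> R.
Hypothesis T_nonexpansive : forall u v c, dist_le u v c -> dist_le (T u) (T v) c.
Arguments T_nonexpansive {u v c}.
Variable h : S -> R.
Hypothesis T_fix : T h = h.
Variable x : nat -> S -> R.
Hypothesis x_succ : forall k, x k.+1 = fun s => 2^-1 * x k s + 2^-1 * T (x k) s.
Variable rho : R.
Hypothesis x0_h : dist_le (x 0) h rho.

Lemma iter_dist_fix k : dist_le (x k) h rho.
Proof.
elim: k => [|k IH]; first exact: x0_h.
have := T_nonexpansive IH; rewrite T_fix => Th.
by rewrite x_succ -(half_add rho); exact: dist_le_avg.
Qed.

Lemma iter0_dist_T j : dist_le (x 0) (T (x j)) (2 * rho).
Proof.
have := T_nonexpansive (iter_dist_fix j); rewrite T_fix => Th s.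
have -> : x 0 s - T (x j) s = (x 0 s - h s) + (h s - T (x j) s) by ring.
by rewrite mulr2n mulrDl mul1r (le_trans (ler_normD _ _)) // lerD // distrC.
Qed.

Lemma iter_dist_iter m :
  (forall j, (m <= j)%N -> dist_le (x m) (T (x j)) (2 * rho * binom_prob (m + j) m j.+2)) ->
  forall n, (m <= n)%N -> dist_le (x m) (x n) (2 * rho * binom_prob (m + n) m n).
Proof.
move=> xT n /subnKC <-; elim: (n - m)%N => [|i IH].
  by move=> s; rewrite addn0 binom_probxx mulr0 subrr normr0.
rewrite addnS binom_prob_stepr ?leq_addr // x_succ; apply: dist_le_sym.
have -> : 2 * rho * (2^-1 * binom_prob (m + (m + i)) m (m + i) +
                     2^-1 * binom_prob (m + (m + i)) m (m + i).+2) =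
          2^-1 * (2 * rho * binom_prob (m + (m + i)) m (m + i)) +
          2^-1 * (2 * rho * binom_prob (m + (m + i)) m (m + i).+2) by ring.
by apply: dist_le_avg; apply: dist_le_sym => //; exact/xT/leq_addr.
Qed.

Lemma iter_dist_T m j : (m <= j)%N ->
  dist_le (x m) (T (x j)) (2 * rho * binom_prob (m + j) m j.+2).
Proof.
elim: m j => [|m IH] j mj; first by rewrite binom_prob0 // mulr1; exact: iter0_dist_T.
have xx := @iter_dist_iter m IH j (ltnW mj).
rewrite binom_prob_stepl // x_succ.
have -> : 2 * rho * (2^-1 * binom_prob (m + j) m j.+2 + 2^-1 * binom_prob (m + j) m j) =
          2^-1 * (2 * rho * binom_prob (m + j) m j.+2) +
          2^-1 * (2 * rho * binom_prob (m + j) m j) by ring.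
exact: dist_le_avg (IH _ (ltnW mj)) (T_nonexpansive xx).
Qed.

(* [x k - x (k + 1)] is half the residual [x k - T (x k)]. *)
Lemma iter_residual k : dist_le (T (x k)) (x k) (4 * rho * binom_mid k).
Proof.
move=> s; have := @iter_dist_iter k (@iter_dist_T k) k.+1 (leqnSn k) s.
rewrite binom_prob_mid x_succ /=.
have -> : x k s - (2^-1 * x k s + 2^-1 * T (x k) s) = - 2^-1 * (T (x k) s - x k s).
  by field.
rewrite normrM normrN [`|2^-1|]gtr0_norm ?invr_gt0 ?ltr0n //.
have -> : 4 * rho * binom_mid k = 2 * (2 * rho * binom_mid k) by ring.
by move=> half_le; rewrite -(half_add `|T (x k) s - x k s|) mulr_natl mulr2n lerD.
Qed.

End KrasnoselskiiMann.

Section BellmanOperator.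
Variables (R : realType) (S A : finType) (P : S -> A -> S -> R) (r : S -> A -> R).
Hypothesis hA : (0 < #|A|)%N.
Hypothesis hP : is_kernel P.

Lemma le_maxA (F : A -> R) a : F a <= Defs.maxA F.
Proof.
rewrite /Defs.maxA; apply: ub_le_sup; last by exists a.
by exists (\big[Num.max/F a]_(b : A) F b) => _ [b _ <-]; exact: le_bigmax.
Qed.

Lemma maxA_le (F : A -> R) c : (forall a, F a <= c) -> Defs.maxA F <= c.
Proof.
move=> Fc; case/card_gt0P: hA => a0 _; rewrite /Defs.maxA.
by apply: ge_sup => [|_ [b _ <-]]; [exists (F a0), a0 | exact: Fc].
Qed.

Lemma kernel_sum_addr s a (V : S -> R) c :
  \sum_(s' : S) P s a s' * (V s' + c) = \sum_(s' : S) P s a s' * V s' + c.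
Proof.
under eq_bigr do rewrite mulrDr.
by rewrite big_split /= -mulr_suml hP.2 mul1r.
Qed.

Lemma Tbell_le U V c s : (forall s', U s' <= V s' + c) ->
  Tbell P r U s <= Tbell P r V s + c.
Proof.
move=> UV; apply: maxA_le => a.
apply: (@le_trans _ _ (r s a + \sum_(s' : S) P s a s' * (V s' + c))).
  by rewrite lerD2l ler_sum // => s' _; rewrite ler_wpM2l // hP.1.
by rewrite kernel_sum_addr addrA lerD2r (le_maxA (fun a => r s a + _)).
Qed.

Lemma Tbell_nonexpansive U V c : dist_le U V c -> dist_le (Tbell P r U) (Tbell P r V) c.
Proof.
move=> UV s; rewrite ler_distl lerBlDr; apply/andP; split; apply: Tbell_le => s'.
  by have := UV s'; rewrite ler_distl lerBlDr => /andP[].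
by have := UV s'; rewrite ler_distl => /andP[].
Qed.

Lemma Tbell_shift (g : S -> R) : (forall s a, \sum_(s' : S) P s a s' * g s' = g s) ->
  forall V t s, Tbell P r (fun s => V s + t * g s) s = Tbell P r V s + t * g s.
Proof.
move=> hg V t s; apply/eqP; rewrite eq_le -lerBrDr.
have shift a : \sum_(s' : S) P s a s' * (V s' + t * g s') =
               \sum_(s' : S) P s a s' * V s' + t * g s.
  under eq_bigr do rewrite mulrDr mulrCA.
  by rewrite big_split /= -mulr_sumr hg.
apply/andP; split; apply: maxA_le => a.
  by rewrite shift addrA lerD2r (le_maxA (fun a => r s a + _)).
by rewrite lerBrDr -addrA -shift (le_maxA (fun a => r s a + _)).
Qed.

Lemma is_policy_det (a : A) : is_policy (fun (_ : S) b => (b == a)%:R : R).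
Proof.
split=> [s b | s]; first by rewrite ler0n.
by rewrite (bigD1 a) //= eqxx big1 ?addr0 // => b /negbTE ->.
Qed.

Lemma Ppi_det (a : A) V s :
  Ppi P (fun (_ : S) b => (b == a)%:R : R) V s = \sum_(s' : S) P s a s' * V s'.
Proof.
rewrite /Ppi (bigD1 a) //= eqxx mul1r [X in _ + X]big1 ?addr0 // => b /negbTE ->.
by rewrite mul0r.
Qed.

End BellmanOperator.

Section LiminfBounds.
Context {R : realType}.
Local Open Scope classical_set_scope.

Lemma bounded_fun_le (u : nat -> R) B : (forall n, `|u n| <= B) -> bounded_fun u.
Proof.
move=> uB; rewrite /bounded_near; near=> M => n _ /=.
by apply: le_trans (uB n) _; near: M; apply: nbhs_pinfty_ge; exact: num_real.
Unshelve. all: by end_near.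
Qed.

Lemma le_limn_inf (u v : nat -> R) : bounded_fun u -> bounded_fun v ->
  (forall n, u n <= v n) -> limn_inf u <= limn_inf v.
Proof.
move=> bu bv uv; rewrite !limn_infE //.
apply: ge_sup => [|_ [n _ <-]]; first by exists (infs u 0), 0%N.
apply: (@le_trans _ _ (infs v n)); last first.
  by apply: ub_le_sup; [exact: bounded_fun_has_ubound_infs | exists n].
apply: lb_le_inf => [|_ [m nm <-]]; first by exists (v n), n => /=.
apply: le_trans (uv m); apply: ge_inf; last by exists m.
exact/has_lbound_sdrop/bounded_fun_has_lbound.
Qed.

Lemma cvg_addr_harmonic (a b : R) : (fun n : nat => a + b / n.+1%:R) @ \oo --> a.
Proof.
rewrite -[X in _ --> X]addr0 -[X in _ --> _ + X](mulr0 b).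
exact: cvgD (cvg_cst _) (cvgM (cvg_cst _) (@cvg_harmonic R)).
Qed.

Lemma limn_inf_near (u : nat -> R) (l c B : R) :
  (forall n, `|u n - l| <= c + B / n.+1%:R) -> l - c <= limn_inf u <= l + c.
Proof.
move=> ul.
have bound_le n : c + B / n.+1%:R <= c + `|B|.
  rewrite lerD2l (le_trans (ler_norm _)) // normrM normfV normr_nat.
  by rewrite ler_pdivrMr ?ltr0n // ler_peMr // ler1n.
have bu : bounded_fun u.
  apply: (@bounded_fun_le _ (`|l| + (c + `|B|))) => n.
  rewrite -(subrK l (u n)) addrC (le_trans (ler_normD _ _)) // lerD2l.
  exact: le_trans (ul n) (bound_le n).
have cvg_lo := @cvg_addr_harmonic (l - c) (- B).
have cvg_hi := @cvg_addr_harmonic (l + c) B.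
apply/andP; split.
  rewrite -(cvg_limn_inf_sup cvg_lo).1.
  apply: le_limn_inf => //; first exact: cvg_seq_bounded (cvgP _ cvg_lo).
  by move=> n; have := ul n; rewrite ler_distl mulNr => /andP[+ _]; rewrite opprD addrA.
rewrite -(cvg_limn_inf_sup cvg_hi).1.
apply: le_limn_inf => //; first exact: cvg_seq_bounded (cvgP _ cvg_hi).
by move=> n; have := ul n; rewrite ler_distl addrA => /andP[].
Qed.

End LiminfBounds.

Section PolicyEvaluation.
Variables (R : realType) (S A : finType) (P : S -> A -> S -> R) (r : S -> A -> R).
Hypothesis hP : is_kernel P.
Variable pi : S -> A -> R.
Hypothesis hpi : is_policy pi.

Lemma PpiD u v s : Ppi P pi (fun s => u s + v s) s = Ppi P pi u s + Ppi P pi v s.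
Proof.
rewrite /Ppi -big_split; apply: eq_bigr => a _ /=.
by rewrite -mulrDr -big_split; congr (_ * _); apply: eq_bigr => s' _; rewrite mulrDr.
Qed.

Lemma PpiN u s : Ppi P pi (fun s => - u s) s = - Ppi P pi u s.
Proof.
rewrite /Ppi -sumrN; apply: eq_bigr => a _.
by rewrite -mulrN -sumrN; congr (_ * _); apply: eq_bigr => s' _; rewrite mulrN.
Qed.

Lemma iter_PpiD t u v s :
  iter t (Ppi P pi) (fun s => u s + v s) s = iter t (Ppi P pi) u s + iter t (Ppi P pi) v s.
Proof.
elim: t s => [|t IH] s //=.
by rewrite -PpiD; congr Ppi; apply/funext => s'; rewrite IH.
Qed.

Lemma iter_PpiN t u s : iter t (Ppi P pi) (fun s => - u s) s = - iter t (Ppi P pi) u s.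
Proof.
elim: t s => [|t IH] s //=.
by rewrite -PpiN; congr Ppi; apply/funext => s'; rewrite IH.
Qed.

Lemma Ppi_norm_le u c s : (forall s', `|u s'| <= c) -> `|Ppi P pi u s| <= c.
Proof.
move=> uc; rewrite /Ppi (le_trans (ler_norm_sum _ _ _)) //.
rewrite -[leRHS]mul1r -(hpi.2 s) mulr_suml ler_sum // => a _.
rewrite normrM ger0_norm ?hpi.1 // ler_wpM2l ?hpi.1 //.
rewrite (le_trans (ler_norm_sum _ _ _)) // -[leRHS]mul1r -(hP.2 s a) mulr_suml.
by rewrite ler_sum // => s' _; rewrite normrM ger0_norm ?hP.1 // ler_wpM2l ?hP.1.
Qed.

Lemma iter_Ppi_norm_le t u c s : (forall s', `|u s'| <= c) ->
  `|iter t (Ppi P pi) u s| <= c.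
Proof. by move=> uc; elim: t s => [|t IH] s //=; exact: Ppi_norm_le. Qed.

Variables (V g d : S -> R).
Hypothesis Ppi_g : forall s, Ppi P pi g s = g s.
Hypothesis Tpi_V : forall s, Tpi P r pi V s = V s + g s + d s.

Lemma sum_iter_rpi N s :
  \sum_(t < N) iter t (Ppi P pi) (rpi r pi) s =
  V s - iter N (Ppi P pi) V s + N%:R * g s + \sum_(t < N) iter t (Ppi P pi) d s.
Proof.
have rpiE : rpi r pi = fun s => V s + - Ppi P pi V s + g s + d s.
  by apply/funext => s'; have := Tpi_V s'; rewrite /Tpi; lra.
have iter_g t : iter t (Ppi P pi) g = g.
  by elim: t => //= t ->; exact/funext/Ppi_g.
elim: N => [|N IH]; first by rewrite !big_ord0 /= mul0r; ring.
rewrite !big_ord_recr /= IH rpiE !iter_PpiD iter_PpiN iter_g -iterSr /= -natr1.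
ring.
Qed.

Variables (c M : R).
Hypothesis d_le : forall s, `|d s| <= c.
Hypothesis V_le : forall s, `|V s| <= M.

Lemma avg_iter_rpi_dist n s :
  `|n.+1%:R^-1 * \sum_(t < n.+1) iter t (Ppi P pi) (rpi r pi) s - g s| <=
  c + 2 * M / n.+1%:R.
Proof.
have n0 : (0 : R) < n.+1%:R by rewrite ltr0n.
rewrite sum_iter_rpi.
have -> : n.+1%:R^-1 * (V s - iter n.+1 (Ppi P pi) V s + n.+1%:R * g s +
            \sum_(t < n.+1) iter t (Ppi P pi) d s) - g s =
          n.+1%:R^-1 * ((V s - iter n.+1 (Ppi P pi) V s) +
            \sum_(t < n.+1) iter t (Ppi P pi) d s) by field; rewrite lt0r_neq0.
rewrite normrM ger0_norm ?invr_ge0 ?ler0n // -ler_pdivlMl ?invr_gt0 // invrK.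
rewrite mulrDr mulrCA mulfV ?lt0r_neq0 // mulr1 addrC.
rewrite (le_trans (ler_normD _ _)) // lerD //.
  rewrite (le_trans (ler_norm_sum _ _ _)) // [leRHS]mulr_natl.
  rewrite -[X in c *+ X]card_ord -sumr_const ler_sum // => t _.
  exact: iter_Ppi_norm_le.
rewrite (le_trans (ler_normB _ _)) // mulr2n mulrDl mul1r lerD //.
exact: iter_Ppi_norm_le.
Qed.

Lemma gain_dist_le s : `|g s - gain P r pi s| <= c.
Proof.
have := @limn_inf_near R _ _ _ _ (avg_iter_rpi_dist ^~ s).
by rewrite -/(gain P r pi s) distrC ler_distl.
Qed.

End PolicyEvaluation.

Section AveragedValueIteration.
Variables (R : realType) (S A : finType) (P : S -> A -> S -> R) (r : S -> A -> R).
Hypothesis hA : (0 < #|A|)%N.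
Hypothesis hP : is_kernel P.
Variables (g h : S -> R).
Hypothesis g_invariant : forall s a, \sum_(s' : S) P s a s' * g s' = g s.
Hypothesis Tbell_h : forall s, Tbell P r h s = h s + g s.

(* Removing the drift [k g / 2] turns averaged value iteration into the
   Krasnosel'skii-Mann iteration of [V |-> T V - g], which fixes [h]. *)
Lemma Viter_residual V0 rho k : (forall s, `|V0 s - h s| <= rho) ->
  forall s, `|Tbell P r (Viter P r V0 k) s - Viter P r V0 k s - g s| <=
            4 * rho * binom_mid k.
Proof.
move=> V0_h; pose T V s := Tbell P r V s - g s.
pose x k s := Viter P r V0 k s - k%:R / 2 * g s.
have ViterE j : Viter P r V0 j = fun s => x j s + j%:R / 2 * g s.
  by apply/funext => s; rewrite subrK.
have T_nonexpansive u v c : dist_le u v c -> dist_le (T u) (T v) c.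
  by move=> uv s; rewrite /T opprB addrA subrK; exact: Tbell_nonexpansive.
have T_fix : T h = h by apply/funext => s; rewrite /T Tbell_h addrK.
have x_succ j : x j.+1 = fun s => 2^-1 * x j s + 2^-1 * T (x j) s.
  apply/funext => s; rewrite {1}/x.
  have -> : Viter P r V0 j.+1 s =
            2^-1 * Viter P r V0 j s + 2^-1 * Tbell P r (Viter P r V0 j) s by [].
  by rewrite ViterE (Tbell_shift r hA g_invariant) /T -natr1; field.
have x0_h : dist_le (x 0) h rho by move=> s; rewrite /x /= !mul0r subr0.
move=> s; have := iter_residual T_nonexpansive T_fix x_succ x0_h k s.
by rewrite ViterE (Tbell_shift r hA g_invariant) /T /=; congr (`|_| <= _); ring.
Qed.

End AveragedValueIteration.

Section SupNorm.
Context {R : realType} {S : finType}.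

Lemma norm_le_supnorm (v : S -> R) s : `|v s| <= supnorm v.
Proof. exact: le_bigmax. Qed.

Lemma supnorm_ge0 (v : S -> R) : 0 <= supnorm v.
Proof. by rewrite /supnorm; elim/big_ind: _ => // x y x0 y0; rewrite le_max x0. Qed.

Lemma supnorm_le (v : S -> R) c : 0 <= c -> (forall s, `|v s| <= c) -> supnorm v <= c.
Proof. by move=> c0 vc; apply: bigmax_le. Qed.

End SupNorm.

Unset Implicit Arguments.

Theorem corollary1 (R : realType) (S A : finType)
  (P : S -> A -> S -> R) (r : S -> A -> R)
  (hA : (0 < #|A|)%N)
  (hP : is_kernel P)
  (hgP : forall mu, is_policy mu -> forall s, Ppi P mu (gstar P r) s = gstar P r s)
  (h : S -> R) (hMB : modified_bellman P r (gstar P r) h)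
  (V0 : S -> R) (pik : nat -> S -> A -> R)
  (hgreedy : forall k, is_policy (pik k) /\
     forall s, Tpi P r (pik k) (Viter P r V0 k) s = Tbell P r (Viter P r V0 k) s) :
  forall k : nat, (1 <= k)%N ->
    supnorm (fun s => gstar P r s - gain P r (pik k) s)
      <= supnorm (fun s => Tbell P r (Viter P r V0 k) s - Viter P r V0 k s - gstar P r s)
    /\ supnorm (fun s => Tbell P r (Viter P r V0 k) s - Viter P r V0 k s - gstar P r s)
      <= 4 * supnorm (fun s => V0 s - h s) / Num.sqrt (pi * k%:R).
Proof.
move=> k k1.
set res := fun s => Tbell P r (Viter P r V0 k) s - Viter P r V0 k s - gstar P r s.
have g_invariant s a : \sum_(s' : S) P s a s' * gstar P r s' = gstar P r s.
  by rewrite -Ppi_det hgP //; exact: is_policy_det.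
have [_ [Tbell_h _]] := hMB.
have [pik_policy pik_greedy] := hgreedy k.
split; apply: supnorm_le; rewrite ?mulr_ge0 ?invr_ge0 ?sqrtr_ge0 ?supnorm_ge0 //.
  apply: (gain_dist_le hP pik_policy (hgP _ pik_policy) (V := Viter P r V0 k) (d := res)).
  - by move=> s; rewrite pik_greedy /res; ring.
  - exact: norm_le_supnorm.
  - exact: norm_le_supnorm.
have V0_h := norm_le_supnorm (fun s => V0 s - h s).
move=> s; apply: le_trans (Viter_residual hA hP g_invariant Tbell_h k V0_h s) _.
by rewrite ler_wpM2l ?mulr_ge0 ?supnorm_ge0 // binom_mid_le_inv_sqrt.
Qed.
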